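(* Let $D^+$ and $D^-$ be oriented link diagrams that are identical except at one crossing, which is positive in $D^+$ and negative in $D^-$. Let $D_0^+$ be the diagram obtained from $D^+$ by the $0$-smoothing of this crossing, with the orientation inherited from $D^+$ (it coincides, as an oriented diagram, with the $1$-smoothing $D_1^-$ of $D^-$ at that crossing, with orientation inherited from $D^-$). Let $D_0^-=D_1^+$ be the diagram obtained by the other smoothing of that crossing (the $1$-smoothing of $D^+$, equivalently the $0$-smoothing of $D^-$), equipped with one arbitrary fixed orientation. Put $c^+ = n_-(D_1^+)-n_-(D^+)$ and $c^- = n_-(D_0^-)-n_-(D^-)$, where $n_-$ denotes the number of negative crossings (so $c^+=c^-+1$). Then for all integers $i,j$ the sequence \[ 0 \to C^{i-2,j-3}(D_0^+) \xrightarrow{\psi_1} C^{i-2,j-4}(D^-) \xrightarrow{\phi} C^{i,j}(D^+) \xrightarrow{\psi_2} C^{i,j-1}(D_0^+) \to 0 \] is exact, where $\psi_1$ is the inclusion map of the short exact sequence $0\to C^{a,b+1}(D_1^-)\to C^{a,b}(D^-)\to C^{a-c^-,b-3c^--1}(D_0^-)\to 0$ (taken with $(a,b)=(i-2,j-4)$), $\psi_2$ is the projection map of the short exact sequence $0\to C^{i-c^+-1,j-3c^+-2}(D_1^+)\to C^{i,j}(D^+)\to C^{i,j-1}(D_0^+)\to 0$, and $\phi=\phi_2\circ\phi_1$ with $\phi_1: C^{i-2,j-4}(D^-)\to C^{(i-2)-c^-,(j-4)-3c^--1}(D_0^-)$ the projection of the first of these short exact sequences and $\phi_2: C^{i-c^+-1,j-3c^+-2}(D_0^-)\to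 C^{i,j}(D^+)$ the inclusion of the second (these two groups are equal since $c^+=c^-+1$ and $D_0^-=D_1^+$).
   Context: Khovanov chain complex over $\mathbb{Q}$: let $D$ be an oriented link diagram with $n$ crossings numbered $1,\dots,n$, $n_+$ positive and $n_-$ negative crossings. Each crossing has a $0$-smoothing and a $1$-smoothing (the standard Khovanov/Kauffman-bracket $A$- and $B$-smoothings). For $\alpha\in\{0,1\}^n$ let $r_\alpha$ be the number of $1$'s and $k_\alpha$ the number of circles of the corresponding full smoothing. Let $V$ be the graded $\mathbb{Q}$-vector space with basis $e,x$, $\deg e=1$, $\deg x=-1$; for a graded space $W$, $W\{l\}^m=W^{m-l}$. Set $V_\alpha=V^{\otimes k_\alpha}\{r_\alpha+n_+-2n_-\}$ and $C^{i,*}(D)=\bigoplus_{r_\alpha=i+n_-}V_\alpha$; an element $v$ of $V_\alpha$ (homogeneous of degree $\deg v$ in $V^{\otimes k_\alpha}$) lies in $C^{i,j}(D)$ with $i=r_\alpha-n_-$ and $j=\deg v+r_\alpha+n_+-2n_-$. The differential $d:C^{i,*}\to C^{i+1,*}$ is the sum over edges $\zeta:\alpha\to\alpha'$ of the cube (changing one $0$ to a $1$) of $(-1)^{\#\{1\text{'s to the left of the changed position}\}}d_\zeta$, where $d_\zeta$ is the identity on circles not touching the changed crossing and is $m$ (merging two circles) or $\Delta$ (splitting one circle), with $m(e\otimes e)=e$, $m(e\otimes x)=m(x\otimes e)=x$, $m(x\otimes x)=0$, $\Delta(e)=e\otimes x+x\otimes e$, $\Delta(x)=x\otimes x$. For a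 positive crossing, the states with that crossing $0$-smoothed give a quotient complex identified (with the indicated shifts) with $C(D_0^+)$ and those with it $1$-smoothed give a subcomplex identified with $C(D_1^+)$, yielding the short exact sequence $0\to C^{i-c^+-1,j-3c^+-2}(D_1^+)\to C^{i,j}(D^+)\to C^{i,j-1}(D_0^+)\to0$; for a negative crossing similarly $0\to C^{i,j+1}(D_1^-)\to C^{i,j}(D^-)\to C^{i-c^-,j-3c^--1}(D_0^-)\to0$, where the first map includes the $1$-smoothed states and the second projects to the $0$-smoothed states. *)

From mathcomp Require Import all_boot all_order all_algebra.
Set Implicit Arguments. Unset Strict Implicit. Unset Printing Implicit Defensive.
Import GRing.Theory Num.Theory.

(* A diagram with [n] vertices and [m] free (crossingless)
   circles.  Each vertex v has 4 slots (v,0),(v,1),(v,2),(v,3), listed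
   counterclockwise in the plane.  [link] pairs slots joined by an arc.
   A vertex is either a crossing ([iscr v = true]) or a site where a
   crossing has already been smoothed ([iscr v = false]).
   - crossing with [kb v = false]: under strand = slots 0,2; over = 1,3;
   - crossing with [kb v = true] : under strand = slots 1,3; over = 0,2;
   - smoothed site with [kb v = p]: arcs join slot pairs of "pairing p",
     pairing false = {0,1},{2,3}, pairing true = {1,2},{3,0}.
   The 0-smoothing (Kauffman A-smoothing) of a crossing with [kb v = u]
   has pairing u, its 1-smoothing (B-smoothing) has pairing ~~u.       *)

Definition slot (n : nat) := ('I_n * 'I_4)%type.

Record diagram (n m : nat) := Diagram {
  link : slot n -> slot n;
  iscr : 'I_n -> bool;
  kb   : 'I_n -> bool }.

Definition sl4 (i : nat) : 'I_4 := inord (i %% 4).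

Definition rot (n : nat) (s : slot n) : slot n := (s.1, sl4 (s.2 + 1)).

Definition partner (p : bool) (i : 'I_4) : 'I_4 :=
  if odd i == p then sl4 (i + 1) else sl4 (i + 3).

(* the underlying 4-valent ribbon graph is planar (genus 0):
   V - E + F = 2 * #components, with E = 2V *)
Definition nfaces n m (D : diagram n m) : nat :=
  #|[pred s : slot n | froots (fun s => rot (link D s)) s]|.

Definition ncomp n m (D : diagram n m) : nat :=
  #|[pred s : slot n | roots (fun s t : slot n => (s.1 == t.1) || (t == link D s)) s]|.

Definition link_diagram n m (D : diagram n m) : Prop :=
  [/\ forall s, link D (link D s) = s,
      forall s, link D s != s
    & nfaces D = (n + 2 * ncomp D)%N].

(* Orientations: [o s = true] iff the arc at slot s points into the vertex. *)
Definition strand_partner n m (D : diagram n m) (v : 'I_n) (i : 'I_4) : 'I_4 :=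
  if iscr D v then sl4 (i + 2) else partner (kb D v) i.

Definition oriented n m (D : diagram n m) (o : slot n -> bool) : Prop :=
  (forall s, o (link D s) = ~~ o s) /\
  (forall v (i : 'I_4), o (v, strand_partner D v i) = ~~ o (v, i)).

(* sign of a crossing: positive iff under strand and over strand cross
   as a right-handed crossing *)
Definition positive n m (D : diagram n m) (o : slot n -> bool) (v : 'I_n) : bool :=
  o (v, sl4 (kb D v)) == o (v, sl4 (kb D v + 3)).

Definition npos n m (D : diagram n m) o : nat :=
  #|[pred v | iscr D v && positive D o v]|.
Definition nneg n m (D : diagram n m) o : nat :=
  #|[pred v | iscr D v && ~~ positive D o v]|.

Definition flipc n m (D : diagram n m) (k : 'I_n) : diagram n m :=
  Diagram m (link D) (iscr D) (fun v => if v == k then ~~ kb D v else kb D v).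

Definition smooth n m (D : diagram n m) (k : 'I_n) (b : bool) : diagram n m :=
  Diagram m (link D) (fun v => if v == k then false else iscr D v)
    (fun v => if v == k then kb D v (+) b else kb D v).

Definition resp n m (D : diagram n m) (a : {ffun 'I_n -> bool}) (v : 'I_n) : bool :=
  if iscr D v then kb D v (+) a v else kb D v.

Definition rpart n m (D : diagram n m) a (s : slot n) : slot n :=
  (s.1, partner (resp D a s.1) s.2).

(* two slots are adjacent on the resolved 1-manifold of state a *)
Definition adj n m (D : diagram n m) a : rel (slot n) :=
  fun s t => (t == link D s) || (t == rpart D a s).

(* enhanced state: (state, labels of slots (constant on circles),
   labels of free circles); label true = e, false = x *)
Definition Enh (n m : nat) :=
  ({ffun 'I_n -> bool} * {ffun slot n -> bool} * {ffun 'I_m -> bool})%type.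

Definition valid n m (D : diagram n m) (t : Enh n m) : bool :=
  [forall v, ~~ iscr D v ==> ~~ t.1.1 v] &&
  [forall s, forall s', connect (adj D t.1.1) s s' ==> (t.1.2 s == t.1.2 s')].

Definition ncirc n m (D : diagram n m) (t : Enh n m) (b : bool) : nat :=
  (#|[pred s | roots (adj D t.1.1) s && (t.1.2 s == b)]|
   + #|[pred x | t.2 x == b]|)%N.

Definition rk n m (t : Enh n m) : nat := #|[pred v | t.1.1 v]|.

Definition hdeg n m (D : diagram n m) o (t : Enh n m) : int :=
  ((rk t)%:Z - (nneg D o)%:Z)%R.

Definition qdeg n m (D : diagram n m) o (t : Enh n m) : int :=
  ((ncirc D t true)%:Z - (ncirc D t false)%:Z + (rk t)%:Z
   + (npos D o)%:Z - 2 * (nneg D o)%:Z)%R.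

(* C^{i,j}(D) : the Q-vector space with basis the valid enhanced states of
   bidegree (i,j), realised as the rational functions supported on them. *)
Definition inKh n m (D : diagram n m) o (i j : int) (f : {ffun Enh n m -> rat}) : Prop :=
  forall t, f t != 0%R -> [/\ valid D t, hdeg D o t = i & qdeg D o t = j].

(* inclusion of the states with crossing k 1-smoothed, and projection to the
   states with crossing k 0-smoothed *)
Definition setk n (a : {ffun 'I_n -> bool}) (k : 'I_n) (b : bool) : {ffun 'I_n -> bool} :=
  [ffun v => if v == k then b else a v].

Definition incl n m (k : 'I_n) (f : {ffun Enh n m -> rat}) : {ffun Enh n m -> rat} :=
  [ffun t : Enh n m => if t.1.1 k then f (setk t.1.1 k false, t.1.2, t.2) else 0%R].

Definition proj n m (k : 'I_n) (g : {ffun Enh n m -> rat}) : {ffun Enh n m -> rat} :=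
  [ffun t : Enh n m => if t.1.1 k then 0%R else g t].

Definition exact4 (T : finType) (A B C E : {ffun T -> rat} -> Prop)
  (f g h : {ffun T -> rat} -> {ffun T -> rat}) : Prop :=
  [/\ (forall x, A x -> B (f x)) /\ (forall x, B x -> C (g x)) /\
      (forall x, C x -> E (h x)),
      (forall x y, A x -> A y -> f x = f y -> x = y),
      (forall y, B y -> (g y = 0%R <-> exists2 x, A x & y = f x)),
      (forall z, C z -> (h z = 0%R <-> exists2 y, B y & z = g y))
    & (forall w, E w -> exists2 z, C z & w = h z)].

(* Every chain group in the sequence is spanned by enhanced states of one and
   the same underlying diagram, and each of the four maps either raises the
   bit of the state at k from 0 to 1 or discards the states whose bit is 1.
   Exactness is therefore a statement about states only: the bijections
   a |-> a[k := 1] from D0p to Dm and from Dm (bit 0) to Dp, and the identity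
   from Dp (bit 0) to D0p, preserve the resolved circles, and the bidegree
   shifts they cause, (0,-1), (2,4) and (0,-1), come from the number of
   1-smoothings growing by one and from n_+, n_- changing at the positive
   crossing k as it is flipped or smoothed. *)

From mathcomp Require Import all_boot all_order all_algebra.
From mathcomp Require Import zify.
Set Implicit Arguments. Unset Strict Implicit. Unset Printing Implicit Defensive.
Import GRing.Theory.

Definition on_crossings n m (D : diagram n m) (a : {ffun 'I_n -> bool}) : bool :=
  [forall v, ~~ iscr D v ==> ~~ a v].

Section Resolutions.
Variables (n m : nat).
Implicit Types (D : diagram n m) (a : {ffun 'I_n -> bool}) (k : 'I_n).

Lemma setk_k a k b : setk a k b k = b.
Proof. by rewrite ffunE eqxx. Qed.

Lemma setk_id a k b : a k = b -> setk a k b = a.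
Proof. by move=> akb; apply/ffunP=> v; rewrite ffunE; case: eqP => // ->. Qed.

Lemma setkK a k b c : setk (setk a k b) k c = setk a k c.
Proof. by apply/ffunP=> v; rewrite !ffunE; case: eqP. Qed.

Lemma resp_smooth D k b a : iscr D k -> resp (smooth D k b) a =1 resp D (setk a k b).
Proof. by move=> crk v; rewrite /resp /= ffunE; case: eqP => // ->; rewrite crk. Qed.

Lemma resp_flipc D k a : iscr D k -> resp (flipc D k) a =1 resp D (setk a k (~~ a k)).
Proof.
move=> crk v; rewrite /resp /= ffunE; case: eqP => // ->.
by rewrite crk; case: (kb D k); case: (a k).
Qed.

Lemma adj_resp D D' a a' :
  link D = link D' -> resp D a =1 resp D' a' -> adj D a =2 adj D' a'.
Proof. by move=> eq_link eq_resp s t; rewrite /adj /rpart eq_link eq_resp. Qed.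

Lemma ncirc_adj D D' a a' l fr b : adj D a =2 adj D' a' ->
  ncirc D (a, l, fr) b = ncirc D' (a', l, fr) b.
Proof.
move=> eq_adj; apply: (congr1 (addn^~ _)); apply: eq_card => s.
by rewrite [in LHS]unfold_in [in RHS]unfold_in /= (eq_roots eq_adj s).
Qed.

Lemma valid_adj D D' a a' l fr : adj D a =2 adj D' a' ->
  on_crossings D a = on_crossings D' a' -> valid D (a, l, fr) = valid D' (a', l, fr).
Proof.
move=> eq_adj eq_cr; rewrite /valid /= -/(on_crossings D a) eq_cr.
apply: (congr1 (andb _)); apply: eq_forallb => s; apply: eq_forallb => s'.
by rewrite (eq_connect eq_adj).
Qed.

Lemma valid_smooth D k b (t : Enh n m) : valid (smooth D k b) t -> ~~ t.1.1 k.
Proof. by case/andP=> /forallP/(_ k)/implyP + _; apply; rewrite /= eqxx. Qed.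

Lemma on_crossings_all D a : (forall v, iscr D v) -> on_crossings D a.
Proof. by move=> crossings; apply/forallP=> v; rewrite crossings. Qed.

Lemma on_crossings_smooth D k b a :
  (forall v, iscr D v) -> on_crossings (smooth D k b) a = ~~ a k.
Proof.
move=> crossings; apply/forallP/idP=> [/(_ k) | ak v]; first by rewrite /= eqxx.
by rewrite /= crossings; case: eqP => // ->.
Qed.

Lemma rk_setk_true a k l (fr : {ffun 'I_m -> bool}) :
  ~~ a k -> rk (setk a k true, l, fr) = (rk (a, l, fr)).+1.
Proof.
move=> /negbTE ak; rewrite /rk /= (cardD1 k) [X in _ = X.+1](cardD1 k) !inE setk_k ak.
by apply: congr1; apply: eq_card => v; rewrite !inE ffunE; case: eqP.
Qed.

End Resolutions.

Section CrossingCounts.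
Variables (n m : nat) (D : diagram n m) (o : slot n -> bool) (k : 'I_n).

Lemma npos_smooth b : npos D o = (iscr D k && positive D o k) + npos (smooth D k b) o.
Proof.
rewrite /npos (cardD1 k) [X in _ = _ + X](cardD1 k) !inE /= eqxx add0n.
by apply: congr1; apply: eq_card => v; rewrite !inE /positive /=; case: eqP.
Qed.

Lemma nneg_smooth b : nneg D o = (iscr D k && ~~ positive D o k) + nneg (smooth D k b) o.
Proof.
rewrite /nneg (cardD1 k) [X in _ = _ + X](cardD1 k) !inE /= eqxx add0n.
by apply: congr1; apply: eq_card => v; rewrite !inE /positive /=; case: eqP.
Qed.

Hypotheses (D_oriented : oriented D o) (k_crossing : iscr D k).

Lemma positive_flipc : positive (flipc D k) o k = ~~ positive D o k.
Proof.
have o31 : o (k, sl4 3) = ~~ o (k, sl4 1).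
  rewrite -(D_oriented.2 k (sl4 1)) /strand_partner k_crossing.
  by congr (o (k, _)); apply/val_inj; rewrite /= !inordK.
have s40 : sl4 4 = sl4 0 by apply/val_inj; rewrite /= !inordK.
rewrite /positive /= eqxx; case: (kb D k) => /=; rewrite ?s40 o31;
  by case: (o (k, sl4 0)); case: (o (k, sl4 1)).
Qed.

Lemma npos_flipc b : npos (flipc D k) o = ~~ positive D o k + npos (smooth D k b) o.
Proof.
rewrite /npos (cardD1 k) [X in _ = _ + X](cardD1 k) !inE /= eqxx k_crossing.
rewrite positive_flipc add0n.
by apply: congr1; apply: eq_card => v; rewrite !inE /positive /=; case: eqP.
Qed.

Lemma nneg_flipc b : nneg (flipc D k) o = positive D o k + nneg (smooth D k b) o.
Proof.
rewrite /nneg (cardD1 k) [X in _ = _ + X](cardD1 k) !inE /= eqxx k_crossing.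
rewrite positive_flipc negbK add0n.
by apply: congr1; apply: eq_card => v; rewrite !inE /positive /=; case: eqP.
Qed.

End CrossingCounts.

Lemma ffun0E (aT : finType) (rT : nmodType) (x : aT) : (0%R : {ffun aT -> rT}) x = 0%R.
Proof. by rewrite /GRing.zero /= ffunE. Qed.

Definition supp (T : finType) (S : T -> Prop) (f : {ffun T -> rat}) : Prop :=
  forall t, f t != 0%R -> S t.

Lemma supp_sub (T : finType) (S S' : T -> Prop) f :
  (forall t, S t -> S' t) -> supp S f -> supp S' f.
Proof. by move=> SS' Sf t /Sf /SS'. Qed.

Lemma supp_eq0 (T : finType) (S : T -> Prop) f t : supp S f -> ~ S t -> f t = 0%R.
Proof. by move=> Sf nSt; apply/eqP/negPn/negP => /Sf. Qed.

Section InclProj.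
Variables (n m : nat) (k : 'I_n).
Implicit Types (f : {ffun Enh n m -> rat}) (a : {ffun 'I_n -> bool}).
Implicit Types (P Q : Enh n m -> Prop) (t : Enh n m).

Definition lower f : {ffun Enh n m -> rat} :=
  [ffun t : Enh n m => if t.1.1 k then 0%R else f (setk t.1.1 k true, t.1.2, t.2)].

Lemma inclE f a l fr : incl k f (a, l, fr) = if a k then f (setk a k false, l, fr) else 0%R.
Proof. by rewrite ffunE. Qed.

Lemma projE f t : proj k f t = if t.1.1 k then 0%R else f t.
Proof. by rewrite ffunE. Qed.

Lemma lowerE f a l fr : lower f (a, l, fr) = if a k then 0%R else f (setk a k true, l, fr).
Proof. by rewrite ffunE. Qed.

Lemma proj_incl f : proj k (incl k f) = 0%R.
Proof. by apply/ffunP=> [[[a l] fr]]; rewrite projE inclE ffun0E; case: (a k). Qed.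

Lemma incl_lower f : supp (fun t : Enh n m => t.1.1 k) f -> incl k (lower f) = f.
Proof.
move=> f_up; apply/ffunP=> [[[a l] fr]]; rewrite inclE lowerE setk_k setkK.
case: ifP => [ak | /negP nak]; first by rewrite setk_id.
by rewrite (supp_eq0 f_up).
Qed.

Lemma lower_incl f : supp (fun t : Enh n m => ~~ t.1.1 k) f -> lower (incl k f) = f.
Proof.
move=> f_down; apply/ffunP=> [[[a l] fr]]; rewrite lowerE inclE setk_k setkK.
case: ifP => [ak | nak]; last by rewrite setk_id.
by rewrite (supp_eq0 f_down) //= ak.
Qed.

Lemma proj_id f : supp (fun t : Enh n m => ~~ t.1.1 k) f -> proj k f = f.
Proof.
move=> f_down; apply/ffunP=> t; rewrite projE.
by case: ifP => // tk; rewrite (supp_eq0 f_down) //= tk.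
Qed.

Lemma supp_lower_down f : supp (fun t : Enh n m => ~~ t.1.1 k) (lower f).
Proof. by move=> [[a l] fr]; rewrite lowerE /=; case: (a k); rewrite ?eqxx. Qed.

Lemma proj_eq0 f : proj k f = 0%R <-> supp (fun t : Enh n m => t.1.1 k) f.
Proof.
split=> [f0 t | f_up].
  have := congr1 (fun g : {ffun Enh n m -> rat} => g t) f0; rewrite projE ffun0E /=.
  by case: (t.1.1 k) => // ->; rewrite eqxx.
by apply/ffunP=> t; rewrite projE ffun0E; case: ifP => // /negP /(supp_eq0 f_up).
Qed.

Lemma incl0 : incl k (0%R : {ffun Enh n m -> rat}) = 0%R.
Proof. by apply/ffunP=> [[[a l] fr]]; rewrite inclE !ffun0E; case: (a k). Qed.

Lemma supp_proj_down f : supp (fun t : Enh n m => ~~ t.1.1 k) (proj k f).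
Proof. by move=> t; rewrite projE; case: (t.1.1 k); rewrite ?eqxx. Qed.

Lemma incl_eq0 f : supp (fun t : Enh n m => ~~ t.1.1 k) f -> incl k f = 0%R -> f = 0%R.
Proof.
move=> f_down f0; rewrite -(lower_incl f_down) f0.
by apply/ffunP=> [[[a l] fr]]; rewrite lowerE !ffun0E; case: (a k).
Qed.

Lemma supp_incl P Q f :
  (forall a l fr, ~~ a k -> P (a, l, fr) -> Q (setk a k true, l, fr)) ->
  supp P f -> supp Q (incl k f).
Proof.
move=> PQ Pf [[a l] fr]; rewrite inclE; case: ifP => [ak | _]; last by rewrite eqxx.
by move/Pf/(PQ _ _ _ (negbT (setk_k _ _ _))); rewrite setkK setk_id.
Qed.

Lemma supp_lower P Q f :
  (forall a l fr, ~~ a k -> P (setk a k true, l, fr) -> Q (a, l, fr)) ->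
  supp P f -> supp Q (lower f).
Proof.
move=> PQ Pf [[a l] fr]; rewrite lowerE; case: ifP => [_ | /negbT ak]; first by rewrite eqxx.
by move/Pf/(PQ _ _ _ ak).
Qed.

Lemma supp_proj P Q f :
  (forall t, ~~ t.1.1 k -> P t -> Q t) -> supp P f -> supp Q (proj k f).
Proof.
move=> PQ Pf t; rewrite projE; case: ifP => [_ | /negbT tk]; first by rewrite eqxx.
by move/Pf/(PQ _ tk).
Qed.

Lemma exact4_incl_proj (SA SB SC SE : Enh n m -> Prop) :
  (forall t, SA t -> ~~ t.1.1 k) -> (forall t, SE t -> ~~ t.1.1 k) ->
  (forall a l fr, ~~ a k -> SA (a, l, fr) <-> SB (setk a k true, l, fr)) ->
  (forall a l fr, ~~ a k -> SB (a, l, fr) <-> SC (setk a k true, l, fr)) ->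
  (forall t, ~~ t.1.1 k -> SC t <-> SE t) ->
  exact4 (supp SA) (supp SB) (supp SC) (supp SE)
    (incl k) (fun g => incl k (proj k g)) (proj k).
Proof.
move=> SA_down SE_down SAB SBC SCE; split; first split; [|split|..].
- by move=> x; apply: supp_incl => a l fr ak /(SAB _ _ _ ak).
- move=> y /(supp_proj (fun _ _ => id)).
  by apply: supp_incl => a l fr ak /(SBC _ _ _ ak).
- by move=> z; apply: supp_proj => t tk /(SCE _ tk).
- move=> x y /(supp_sub SA_down) x_down /(supp_sub SA_down) y_down xy.
  by rewrite -(lower_incl x_down) xy lower_incl.
- move=> y By; split=> [/(incl_eq0 (supp_proj_down (f := y))) /proj_eq0 y_up | [x _ ->]].
    exists (lower y); last exact: esym (incl_lower y_up).
    by apply: supp_lower By => a l fr ak /(SAB _ _ _ ak).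
  by rewrite proj_incl incl0.
- move=> z Cz; split=> [/proj_eq0 z_up | [y _ ->]]; last exact: proj_incl.
  exists (lower z); first by apply: supp_lower Cz => a l fr ak /(SBC _ _ _ ak).
  by rewrite proj_id; [exact: esym (incl_lower z_up) | exact: supp_lower_down].
- move=> w Ew; have w_down := supp_sub SE_down Ew.
  exists w; last exact: esym (proj_id w_down).
  by apply: supp_sub Ew => t Et; apply/(SCE _ (SE_down _ Et)).
Qed.
End InclProj.

Definition kh_basis n m (D : diagram n m) o (i j : int) (t : Enh n m) : Prop :=
  [/\ valid D t, hdeg D o t = i & qdeg D o t = j].

Section Skein.
Variables (n m : nat) (Dp : diagram n m) (k : 'I_n) (o : slot n -> bool).
Hypotheses (crossings : forall v, iscr Dp v) (Dp_oriented : oriented Dp o)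
  (k_positive : positive Dp o k).
Implicit Types (a : {ffun 'I_n -> bool}) (l : {ffun slot n -> bool}).
Implicit Types (fr : {ffun 'I_m -> bool}).

Local Notation Dm := (flipc Dp k).
Local Notation D0p := (smooth Dp k false).

Lemma npos_Dp : npos Dp o = (npos D0p o).+1.
Proof. by rewrite (npos_smooth _ _ k false) crossings k_positive. Qed.

Lemma nneg_Dp : nneg Dp o = nneg D0p o.
Proof. by rewrite (nneg_smooth _ _ k false) crossings k_positive. Qed.

Lemma npos_Dm : npos Dm o = npos D0p o.
Proof. by rewrite (npos_flipc Dp_oriented (crossings k) false) k_positive. Qed.

Lemma nneg_Dm : nneg Dm o = (nneg D0p o).+1.
Proof. by rewrite (nneg_flipc Dp_oriented (crossings k) false) k_positive. Qed.

Lemma kh_basis_D0p_Dm a l fr i j : ~~ a k ->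
  kh_basis D0p o i j (a, l, fr) <-> kh_basis Dm o i (j - 1) (setk a k true, l, fr).
Proof.
move=> ak; have eq_adj : adj D0p a =2 adj Dm (setk a k true).
  by apply: adj_resp => // v; rewrite resp_smooth ?resp_flipc // setk_k setkK.
rewrite /kh_basis (valid_adj _ _ eq_adj) ?on_crossings_smooth ?on_crossings_all ?ak //.
rewrite /hdeg /qdeg !(ncirc_adj _ _ _ eq_adj) rk_setk_true // npos_Dm nneg_Dm.
by split=> -[Vt Ht Qt]; split=> //; lia.
Qed.

Lemma kh_basis_Dm_Dp a l fr i j : ~~ a k ->
  kh_basis Dm o i j (a, l, fr) <-> kh_basis Dp o (i + 2) (j + 4) (setk a k true, l, fr).
Proof.
move=> ak; have eq_adj : adj Dm a =2 adj Dp (setk a k true).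
  by apply: adj_resp => // v; rewrite resp_flipc // (negbTE ak).
rewrite /kh_basis (valid_adj _ _ eq_adj) ?on_crossings_all //.
rewrite /hdeg /qdeg !(ncirc_adj _ _ _ eq_adj) rk_setk_true //.
rewrite npos_Dm nneg_Dm npos_Dp nneg_Dp.
by split=> -[Vt Ht Qt]; split=> //; lia.
Qed.

Lemma kh_basis_Dp_D0p (t : Enh n m) i j : ~~ t.1.1 k ->
  kh_basis Dp o i j t <-> kh_basis D0p o i (j - 1) t.
Proof.
case: t => [[a l] fr] /= ak; have eq_adj : adj Dp a =2 adj D0p a.
  by apply: adj_resp => // v; rewrite resp_smooth // setk_id // (negbTE ak).
rewrite /kh_basis (valid_adj _ _ eq_adj) ?on_crossings_smooth ?on_crossings_all ?ak //.
rewrite /hdeg /qdeg !(ncirc_adj _ _ _ eq_adj) npos_Dp nneg_Dp.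
by split=> -[Vt Ht Qt]; split=> //; lia.
Qed.

End Skein.

Theorem mainTheorem1 (n m : nat) (Dp : diagram n m) (k : 'I_n)
    (o o' : slot n -> bool) :
  link_diagram Dp -> (forall v, iscr Dp v) ->
  oriented Dp o -> positive Dp o k ->
  oriented (smooth Dp k true) o' ->
  forall i j : int,
  let Dm := flipc Dp k in
  let D0p := smooth Dp k false in
  let D0m := smooth Dp k true in
  let psi1 := @incl n m k in
  let psi2 := @proj n m k in
  let phi1 := @proj n m k in
  let phi2 := @incl n m k in
  let phi := fun g => phi2 (phi1 g) in
  exact4 (inKh D0p o (i - 2) (j - 3)%R) (inKh Dm o (i - 2) (j - 4))%R
         (inKh Dp o i j) (inKh D0p o i (j - 1)%R) psi1 phi psi2.
Proof.
move=> _ crossings Dp_oriented k_positive _ i j Dm D0p D0m psi1 psi2 phi1 phi2 phi.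
(* The diagram [Dp] need not be a link diagram, and the orientation [o'] of
   [D0m] is irrelevant: C(D0m) only appears inside [phi], which acts state by state. *)
apply: (@exact4_incl_proj n m k (kh_basis D0p o (i - 2) (j - 3))
  (kh_basis Dm o (i - 2) (j - 4)) (kh_basis Dp o i j) (kh_basis D0p o i (j - 1)))%R.
- by move=> t [/valid_smooth].
- by move=> t [/valid_smooth].
- by move=> a l fr ak; rewrite (kh_basis_D0p_Dm crossings Dp_oriented k_positive) // -addrA.
- by move=> a l fr ak; rewrite (kh_basis_Dm_Dp crossings Dp_oriented k_positive) // !subrK.
- by move=> t tk; rewrite (kh_basis_Dp_D0p crossings k_positive).
Qed.
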